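(* Let $S$ be a countable discrete inverse semigroup with identity and $\alpha\colon S\to\mathcal I(X)$ a representation. The following are equivalent: (1) $X$ is $S$-domain measurable; (2) $X$ is not $S$-paradoxical; (3) $X$ is $S$-domain F\o lner.
   Context: Inverse semigroup: each $s$ has a unique $s^*$ with $ss^*s=s$, $s^*ss^*=s^*$. A representation is a unital homomorphism $\alpha\colon S\to\mathcal I(X)$ into the inverse semigroup of partial bijections of $X$; $D_{s^*s}$ denotes the domain of $\alpha_s$, and $\alpha_s\colon D_{s^*s}\to D_{ss^*}$ is a bijection. Measures are finitely additive maps $\mathcal P(X)\to[0,\infty]$. For $A\subseteq X$: $A$ is $S$-domain measurable if some measure $\mu$ has $\mu(A)=1$ and $\mu(B)=\mu(\alpha_s(B))$ for all $s\in S$, $B\subseteq D_{s^*s}$; $A$ is $S$-domain F\o lner if there are finite non-empty $F_n\subseteq A$ with $|\alpha_s(F_n\cap D_{s^*s})\setminus F_n|/|F_n|\to0$ for all $s$; $A$ is $S$-paradoxical if there are $A_i,B_j\subseteq X$, $s_i,t_j\in S$ ($i\le n$, $j\le m$) with $A_i\subseteq D_{s_i^*s_i}$, $B_j\subseteq D_{t_j^*t_j}$ and $A=\bigsqcup_i\alpha_{s_i}(A_i)=\bigsqcup_j\alpha_{t_j}(B_j)\supseteq A_1\sqcup\dots\sqcup A_n\sqcup B_1\sqcup\dots\sqcup B_m$. *)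

From Stdlib Require Import Reals List Classical.
Open Scope R_scope.

Definition IsInverseSemigroup {S : Type} (mul : S -> S -> S) : Prop :=
  (forall a b c, mul (mul a b) c = mul a (mul b c)) /\
  (forall s, exists! t, mul (mul s t) s = s /\ mul (mul t s) t = t).

Definition IsIdentity {S : Type} (mul : S -> S -> S) (e : S) : Prop :=
  forall s, mul e s = s /\ mul s e = s.

Definition Countable (S : Type) : Prop :=
  exists f : nat -> S, forall s, exists n, f n = s.

(* A partial bijection of X is encoded as X -> option X (None = undefined),
   required to be injective on its domain. *)
Definition PartialBijection {X : Type} (f : X -> option X) : Prop :=
  forall x x' y, f x = Some y -> f x' = Some y -> x = x'.

Definition pcomp {X : Type} (f g : X -> option X) : X -> option X :=
  fun x => match g x with Some y => f y | None => None end.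

Definition IsRepresentation {S X : Type} (mul : S -> S -> S) (e : S)
  (alpha : S -> X -> option X) : Prop :=
  (forall s, PartialBijection (alpha s)) /\
  (forall s t x, alpha (mul s t) x = pcomp (alpha s) (alpha t) x) /\
  (forall x, alpha e x = Some x).

Definition Dom {S X : Type} (alpha : S -> X -> option X) (s : S) : X -> Prop :=
  fun x => exists y, alpha s x = Some y.

Definition Img {S X : Type} (alpha : S -> X -> option X) (s : S) (B : X -> Prop)
  : X -> Prop :=
  fun y => exists x, B x /\ alpha s x = Some y.

Definition Subset {X : Type} (A B : X -> Prop) : Prop := forall x, A x -> B x.
Definition Disjoint {X : Type} (A B : X -> Prop) : Prop := forall x, ~ (A x /\ B x).

Inductive ereal : Type := Fin (r : R) | PInf.

Definition eadd (a b : ereal) : ereal :=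
  match a, b with Fin x, Fin y => Fin (x + y) | _, _ => PInf end.

Definition IsMeasure {X : Type} (mu : (X -> Prop) -> ereal) : Prop :=
  (forall A, match mu A with Fin r => 0 <= r | PInf => True end) /\
  mu (fun _ => False) = Fin 0 /\
  (forall A B, Disjoint A B -> mu (fun x => A x \/ B x) = eadd (mu A) (mu B)).

Definition DomainMeasurable {S X : Type} (alpha : S -> X -> option X)
  (A : X -> Prop) : Prop :=
  exists mu : (X -> Prop) -> ereal,
    IsMeasure mu /\ mu A = Fin 1 /\
    (forall s B, Subset B (Dom alpha s) -> mu B = mu (Img alpha s B)).

Definition HasCard {X : Type} (P : X -> Prop) (k : nat) : Prop :=
  exists l : list X, NoDup l /\ (forall x, In x l <-> P x) /\ length l = k.

Definition DomainFolner {S X : Type} (alpha : S -> X -> option X)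
  (A : X -> Prop) : Prop :=
  exists F : nat -> list X,
    (forall n, NoDup (F n) /\ F n <> nil /\ (forall x, In x (F n) -> A x)) /\
    (forall s (eps : R), 0 < eps -> exists N : nat, forall n : nat, (N <= n)%nat ->
       exists k : nat,
         HasCard (fun y => Img alpha s (fun x => In x (F n) /\ Dom alpha s x) y
                           /\ ~ In y (F n)) k /\
         INR k / INR (length (F n)) < eps).

Definition Paradoxical {S X : Type} (alpha : S -> X -> option X)
  (A : X -> Prop) : Prop :=
  exists (n m : nat) (As Bs : nat -> X -> Prop) (s t : nat -> S),
    (forall i, (i < n)%nat -> Subset (As i) (Dom alpha (s i))) /\
    (forall j, (j < m)%nat -> Subset (Bs j) (Dom alpha (t j))) /\
    (forall y, A y <-> exists i, (i < n)%nat /\ Img alpha (s i) (As i) y) /\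
    (forall i i', (i < n)%nat -> (i' < n)%nat -> i <> i' ->
       Disjoint (Img alpha (s i) (As i)) (Img alpha (s i') (As i'))) /\
    (forall y, A y <-> exists j, (j < m)%nat /\ Img alpha (t j) (Bs j) y) /\
    (forall j j', (j < m)%nat -> (j' < m)%nat -> j <> j' ->
       Disjoint (Img alpha (t j) (Bs j)) (Img alpha (t j') (Bs j'))) /\
    (forall i x, (i < n)%nat -> As i x -> A x) /\
    (forall j x, (j < m)%nat -> Bs j x -> A x) /\
    (forall i i', (i < n)%nat -> (i' < n)%nat -> i <> i' -> Disjoint (As i) (As i')) /\
    (forall j j', (j < m)%nat -> (j' < m)%nat -> j <> j' -> Disjoint (Bs j) (Bs j')) /\
    (forall i j, (i < n)%nat -> (j < m)%nat -> Disjoint (As i) (Bs j)).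

(* (1) => (2): an invariant probability measure mu would give
   mu(X) = sum_i mu(A_i) = sum_j mu(B_j) = 1, although the A_i and B_j are disjoint.
   (3) => (1): an ultralimit of the normalised counting measures of a Følner sequence
   is invariant, because alpha_s moves only a vanishing fraction of F_n.
   (2) => (3): if there is no Følner sequence then, S being countable, a single N works
   for every finite F: one of s_0, ..., s_N has |boundary F| >= |F| / (N + 1). Hence
   {e, s_0, ..., s_N} enlarges every finite set by the factor (N + 2) / (N + 1), and its
   words of length N + 1 at least double it. Hall's marriage theorem, with compactness
   for infinite X, then gives injections p, q : X -> X with disjoint ranges moving each
   point along one of these words; pulling the pieces back along the inverse words is a
   paradoxical decomposition. *)

From Stdlib Require Import Reals List Classical ClassicalEpsilon Lia Lra Psatz.
From Stdlib Require Import PropExtensionality FunctionalExtensionality.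
From mathcomp Require filter.
Import ListNotations.

Definition decide (P : Prop) : {P} + {~ P} := excluded_middle_informative P.

Section Cardinality.
Context {T : Type}.

Lemma HasCard_iff (P Q : T -> Prop) k :
  (forall x, P x <-> Q x) -> HasCard P k -> HasCard Q k.
Proof.
  intros H [l [Hn [Hi Hl]]]. exists l; repeat split; auto.
  - intros Hx. apply H, Hi, Hx.
  - intros Hx. apply Hi, H, Hx.
Qed.

Lemma HasCard_NoDup (l : list T) : NoDup l -> HasCard (fun x => In x l) (length l).
Proof. intros H. exists l; repeat split; auto. Qed.

Definition filterP (P : T -> Prop) (l : list T) : list T :=
  filter (fun x => if decide (P x) then true else false) l.

Lemma filterP_In P l x : In x (filterP P l) <-> In x l /\ P x.
Proof.
  unfold filterP. rewrite filter_In. destruct (decide (P x)); split; intros [? ?]; auto.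
  all: try discriminate; contradiction.
Qed.

Lemma filterP_NoDup P l : NoDup l -> NoDup (filterP P l).
Proof. apply NoDup_filter. Qed.

Lemma filterP_length_le P l : (length (filterP P l) <= length l)%nat.
Proof. apply filter_length_le. Qed.

Lemma HasCard_filterP P l : NoDup l -> HasCard (fun x => In x l /\ P x) (length (filterP P l)).
Proof.
  intros H. exists (filterP P l).
  split; [apply filterP_NoDup, H|split; [apply filterP_In|reflexivity]].
Qed.

Definition eq_dec_classical (x y : T) : {x = y} + {x <> y} := decide (x = y).

Lemma HasCard_of_bounded (P : T -> Prop) (l : list T) :
  (forall x, P x -> In x l) -> exists k, HasCard P k.
Proof.
  intros H. set (l' := filterP P (nodup eq_dec_classical l)).
  exists (length l'), l'. repeat split.
  - apply filterP_NoDup, NoDup_nodup.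
  - intros Hx. apply filterP_In in Hx. tauto.
  - intros Hx. apply filterP_In. rewrite nodup_In. auto.
Qed.

Lemma HasCard_bounded (P : T -> Prop) k : HasCard P k -> exists l, forall x, P x -> In x l.
Proof. intros [l [_ [Hi _]]]. exists l. intros x. apply Hi. Qed.

Lemma HasCard_inhabited (P : T -> Prop) k : HasCard P k -> (0 < k)%nat -> exists x, P x.
Proof.
  intros [l [_ [Hi Hl]]] Hk. destruct l as [|x l]; [simpl in Hl; lia|].
  exists x. apply Hi. left; auto.
Qed.

Lemma HasCard_le (P Q : T -> Prop) a b :
  (forall x, P x -> Q x) -> HasCard P a -> HasCard Q b -> (a <= b)%nat.
Proof.
  intros H [l [Hn [Hi <-]]] [l' [Hn' [Hi' <-]]].
  apply NoDup_incl_length; auto. intros x Hx. apply Hi', H, Hi, Hx.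
Qed.

Lemma HasCard_unique (P : T -> Prop) a b : HasCard P a -> HasCard P b -> a = b.
Proof. intros H1 H2. apply Nat.le_antisymm; eapply HasCard_le; eauto. Qed.

Lemma HasCard_disjoint_union (P Q : T -> Prop) a b :
  Disjoint P Q -> HasCard P a -> HasCard Q b -> HasCard (fun x => P x \/ Q x) (a + b).
Proof.
  intros D [l [Hn [Hi <-]]] [l' [Hn' [Hi' <-]]].
  exists (l ++ l'). repeat split.
  - apply NoDup_app; auto. intros x H1 H2. apply (D x). split; [apply Hi|apply Hi']; auto.
  - intros H. apply in_app_or in H. destruct H; [left; apply Hi|right; apply Hi']; auto.
  - intros [H|H]; apply in_or_app; [left; apply Hi|right; apply Hi']; auto.
  - apply length_app.
Qed.

Lemma HasCard_union_le (P Q : T -> Prop) a b c :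
  HasCard P a -> HasCard Q b -> HasCard (fun x => P x \/ Q x) c -> (c <= a + b)%nat.
Proof.
  intros HP HQ HU.
  destruct (HasCard_bounded _ _ HQ) as [l Hl].
  destruct (HasCard_of_bounded (fun x => Q x /\ ~ P x) l) as [b' Hb'].
  { intros x [? ?]; auto. }
  assert (b' <= b)%nat by (eapply HasCard_le; [|exact Hb'|exact HQ]; intros x [? ?]; auto).
  assert (HasCard (fun x => P x \/ Q x) (a + b')).
  { eapply HasCard_iff; [|apply HasCard_disjoint_union; [|exact HP|exact Hb']].
    - intros x. destruct (classic (P x)); tauto.
    - intros x [? [? ?]]; auto. }
  assert (c = a + b')%nat by (eapply HasCard_unique; eauto).
  lia.
Qed.

Lemma HasCard_singleton (b : T) : HasCard (fun y => y = b) 1.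
Proof.
  exists [b]. repeat split.
  - constructor; [intros []|constructor].
  - intros [H|[]]; auto.
  - intros ->. left; auto.
Qed.

Lemma HasCard_remove_le (Q : T -> Prop) b c c' :
  HasCard Q c -> HasCard (fun y => Q y /\ y <> b) c' -> (c <= c' + 1)%nat.
Proof.
  intros H1 H2.
  destruct (HasCard_bounded _ _ H1) as [l Hl].
  destruct (HasCard_of_bounded (fun y => (Q y /\ y <> b) \/ y = b) (b :: l)) as [d Hd].
  { intros y [[? ?]|Hy]; simpl; auto. }
  assert (c <= d)%nat.
  { eapply HasCard_le; [|exact H1|exact Hd]. intros y Hy. destruct (classic (y = b)); auto. }
  assert (d <= c' + 1)%nat by (eapply HasCard_union_le; [exact H2|apply HasCard_singleton|exact Hd]).
  lia.
Qed.

End Cardinality.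

Lemma HasCard_injective_image {T U : Type} (f : T -> option U) (P : T -> Prop) a :
  (forall x x' y, f x = Some y -> f x' = Some y -> x = x') ->
  (forall x, P x -> exists y, f x = Some y) -> HasCard P a ->
  HasCard (fun y => exists x, P x /\ f x = Some y) a.
Proof.
  intros Hinj Hd [l [Hn [Hi <-]]].
  set (g := fun x => match f x with Some y => [y] | None => [] end).
  assert (Himg : forall l', (forall x, In x l' -> P x) -> NoDup l' ->
     NoDup (flat_map g l') /\ length (flat_map g l') = length l' /\
     (forall y, In y (flat_map g l') <-> exists x, In x l' /\ f x = Some y)).
  { induction l' as [|x l' IH]; intros HP Hnd.
    - repeat split; [constructor|intros []|intros [x [[] _]]].
    - inversion Hnd; subst.
      destruct IH as [IH1 [IH2 IH3]]; auto. { intros; apply HP; right; auto. }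
      destruct (Hd x) as [y Hy]. { apply HP; left; auto. }
      assert (Hgx : g x = [y]) by (unfold g; rewrite Hy; auto).
      simpl. rewrite Hgx. simpl. repeat split.
      + constructor; auto. intros Hin. apply IH3 in Hin. destruct Hin as [x' [Hx' Hfx']].
        assert (x = x') by (eapply Hinj; eauto). subst. contradiction.
      + f_equal. exact IH2.
      + intros [<-|H]; [exists x; auto|]. apply IH3 in H. destruct H as [x' [? ?]]. exists x'; auto.
      + intros [x' [[<-|H] Hf]]; [left; congruence|]. right. apply IH3. eauto. }
  destruct (Himg l) as [G1 [G2 G3]]; auto. { intros; apply Hi; auto. }
  exists (flat_map g l). repeat split; auto.
  - intros H. apply G3 in H. destruct H as [x0 [? ?]]. exists x0. split; auto. apply Hi; auto.
  - intros [x0 [? ?]]. apply G3. exists x0; split; auto. apply Hi; auto.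
Qed.

Definition IsUltra {T : Type} (U : (T -> Prop) -> Prop) : Prop :=
  (forall A B, U A -> U B -> U (fun x => A x /\ B x)) /\
  (forall A B, (forall x, A x -> B x) -> U A -> U B) /\
  ~ U (fun _ => False) /\
  (forall A, U A \/ U (fun x => ~ A x)).

Lemma ultrafilter_extends (T : Type) (P : (T -> Prop) -> Prop) :
  P (fun _ => True) ->
  (forall A B, P A -> P B -> P (fun x => A x /\ B x)) ->
  (forall A B, (forall x, A x -> B x) -> P A -> P B) ->
  ~ P (fun _ => False) ->
  exists U, IsUltra U /\ forall A, P A -> U A.
Proof.
  intros PT PI PS P0.
  assert (PF : filter.ProperFilter P) by (split; [exact P0|split; [exact PT|exact PI|exact PS]]).
  destruct (filter.ultraFilterLemma PF) as [U [HU HPU]].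
  destruct (@filter.ultra_proper _ _ HU) as [U_not_empty [UT UI US]].
  exists U. repeat split; auto.
  intros A. exact (filter.in_ultra_setVsetC A HU).
Qed.

Section Ultrafilter.
Context {T : Type} (U : (T -> Prop) -> Prop) (HU : IsUltra U).

Lemma ultra_inhabited A : U A -> exists x, A x.
Proof.
  destruct HU as [_ [Hm [H0 _]]]. intros HA. apply NNPP. intros Hn. apply H0.
  eapply Hm; [|exact HA]. intros x Hx. apply Hn. eauto.
Qed.

Lemma ultra_finite_union {A : Type} (l : list A) (Z : A -> T -> Prop) :
  U (fun E => exists x, In x l /\ Z x E) -> exists x, In x l /\ U (Z x).
Proof.
  induction l as [|a l IH]; intros H.
  - destruct (ultra_inhabited _ H) as [E [x [[] _]]].
  - destruct HU as [HI [Hm [_ Hu]]]. destruct (Hu (Z a)) as [Ha|Hna].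
    + exists a. split; auto. left; auto.
    + destruct IH as [x [Hx HZ]].
      * eapply Hm; [|exact (HI _ _ H Hna)]. intros E [[x [[<-|Hx] Hz]] Hn]; [contradiction|eauto].
      * exists x. split; auto. right; auto.
Qed.

End Ultrafilter.

Section Hall.
(* Matchings are total functions; [default] supplies their values off [L]. *)
Context {A B : Type} (default : A -> B).

Definition Nbhd (R : A -> B -> Prop) (P : list A) : B -> Prop :=
  fun b => exists a, In a P /\ R a b.

Definition LocallyFinite (R : A -> B -> Prop) (L : list A) : Prop :=
  forall a, In a L -> exists lb, forall b, R a b -> In b lb.

Definition HallCondition (R : A -> B -> Prop) (L : list A) : Prop :=
  forall P, NoDup P -> incl P L -> forall c, HasCard (Nbhd R P) c -> (length P <= c)%nat.

Definition IsMatching (R : A -> B -> Prop) (L : list A) (g : A -> B) : Prop :=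
  (forall a, In a L -> R a (g a)) /\
  (forall a a', In a L -> In a' L -> g a = g a' -> a = a').

Definition Matchable (n : nat) : Prop :=
  forall R L, (length L <= n)%nat -> NoDup L -> LocallyFinite R L -> HallCondition R L ->
  exists g, IsMatching R L g.

Lemma Nbhd_finite R P : LocallyFinite R P -> exists c, HasCard (Nbhd R P) c.
Proof.
  intros H.
  assert (exists l, forall b, Nbhd R P b -> In b l) as [l Hl].
  { induction P as [|a P IH].
    - exists []. intros b [a [[] _]].
    - destruct IH as [l Hl]. { intros a' Ha'; apply H; right; auto. }
      destruct (H a) as [lb Hlb]. { left; auto. }
      exists (lb ++ l). intros b [a' [[<-|Ha'] Hr]]; apply in_or_app.
      + left; auto.
      + right. apply Hl. exists a'; auto. }
  eapply HasCard_of_bounded; eauto.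
Qed.

Lemma LocallyFinite_incl R R' P L :
  (forall a b, R' a b -> R a b) -> incl P L -> LocallyFinite R L -> LocallyFinite R' P.
Proof.
  intros HR HP HL a Ha. destruct (HL a (HP a Ha)) as [lb Hlb]. exists lb. auto.
Qed.

Lemma Matchable_0 : Matchable 0.
Proof.
  intros R [|a L] Hlen; [|simpl in Hlen; lia].
  exists default. split; [intros a []|intros a a' []].
Qed.

Section CriticalSet.
Variables (R : A -> B -> Prop) (L P0 : list A).
Hypotheses (HL : NoDup L) (HLf : LocallyFinite R L) (HLh : HallCondition R L)
  (HP0 : NoDup P0) (HP0L : incl P0 L) (HP0c : HasCard (Nbhd R P0) (length P0)).

Definition residual_boys : list A := filterP (fun a => ~ In a P0) L.
Definition residual_rel (a : A) (b : B) : Prop := R a b /\ ~ Nbhd R P0 b.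

Lemma residual_boys_length : (length residual_boys + length P0 <= length L)%nat.
Proof.
  rewrite <- length_app. apply NoDup_incl_length.
  - apply NoDup_app; auto.
    + apply filterP_NoDup, HL.
    + intros x H1 H2. apply filterP_In in H1. tauto.
  - intros x Hx. apply in_app_or in Hx. destruct Hx as [Hx|Hx].
    + apply filterP_In in Hx; tauto.
    + apply HP0L; auto.
Qed.

(* A critical set P0 uses up its whole neighbourhood, so the Hall condition
   survives on the remaining boys with that neighbourhood removed. *)
Lemma HallCondition_residual : HallCondition residual_rel residual_boys.
Proof.
  intros Q HQn HQi c Hc.
  assert (HQL : forall x, In x Q -> In x L /\ ~ In x P0) by (intros x Hx; apply (filterP_In (fun a => ~ In a P0)), HQi, Hx).
  assert (HQP : incl (Q ++ P0) L).
  { intros x Hx. apply in_app_or in Hx. destruct Hx as [Hx|Hx]; [apply HQL|apply HP0L]; auto. }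
  destruct (Nbhd_finite R (Q ++ P0)) as [c' Hc'].
  { eapply LocallyFinite_incl; eauto. }
  assert (length (Q ++ P0) <= c')%nat.
  { eapply HLh; eauto. apply NoDup_app; auto. intros x H1 H2. apply HQL in H1. tauto. }
  assert (HasCard (fun b => Nbhd residual_rel Q b \/ Nbhd R P0 b) (c + length P0)) as Hu.
  { apply HasCard_disjoint_union; auto. intros b [[a [_ [_ Hn]]] Hb]. contradiction. }
  assert (c' = c + length P0)%nat.
  { eapply HasCard_unique. exact Hc'. eapply HasCard_iff; [|exact Hu].
    intros b. split.
    - intros [[a [Ha [Hr _]]]|[a [Ha Hr]]]; exists a; split; auto; apply in_or_app; auto.
    - intros [a [Ha Hr]]. destruct (classic (Nbhd R P0 b)) as [Hb|Hb]; auto.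
      left. apply in_app_or in Ha. destruct Ha as [Ha|Ha].
      + exists a. repeat split; auto.
      + exfalso. apply Hb. exists a; auto. }
  rewrite length_app in *. lia.
Qed.

Lemma IsMatching_glue g1 g2 :
  IsMatching R P0 g1 -> IsMatching residual_rel residual_boys g2 ->
  IsMatching R L (fun a => if decide (In a P0) then g1 a else g2 a).
Proof.
  intros [G1r G1i] [G2r G2i].
  assert (Hres : forall a, In a L -> ~ In a P0 -> In a residual_boys) by (intros; apply filterP_In; auto).
  split.
  - intros a Ha. destruct (decide (In a P0)) as [Hin|Hin]; auto. apply G2r; auto.
  - intros a a' Ha Ha'.
    destruct (decide (In a P0)) as [Hin|Hin]; destruct (decide (In a' P0)) as [Hin'|Hin'].
    + apply G1i; auto.
    + intros Heq. destruct (G2r a' (Hres a' Ha' Hin')) as [_ Hn].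
      exfalso. apply Hn. rewrite <- Heq. exists a; split; auto.
    + intros Heq. destruct (G2r a (Hres a Ha Hin)) as [_ Hn].
      exfalso. apply Hn. rewrite Heq. exists a'; split; auto.
    + apply G2i; auto.
Qed.

End CriticalSet.

Definition Critical (R : A -> B -> Prop) (L P0 : list A) : Prop :=
  NoDup P0 /\ incl P0 L /\ P0 <> [] /\ (length P0 < length L)%nat /\
  HasCard (Nbhd R P0) (length P0).

Lemma Matchable_critical n R L P0 :
  Matchable n -> (length L <= S n)%nat -> NoDup L -> LocallyFinite R L -> HallCondition R L ->
  Critical R L P0 -> exists g, IsMatching R L g.
Proof.
  intros IH Hlen Hnd Hf Hh [HP0n [HP0i [HP0ne [HP0l HP0c]]]].
  assert (exists g, IsMatching R P0 g) as [g1 Hg1].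
  { apply IH; [lia|auto|eapply LocallyFinite_incl; eauto|].
    intros P HPn HPi. apply Hh; auto. intros x Hx; apply HP0i, HPi, Hx. }
  pose proof (residual_boys_length L P0 Hnd HP0n HP0i).
  assert (length P0 <> 0)%nat by (destruct P0; [contradiction|simpl; lia]).
  destruct (IH (residual_rel R P0) (residual_boys L P0)) as [g2 Hg2].
  - lia.
  - apply filterP_NoDup, Hnd.
  - eapply LocallyFinite_incl; [| |exact Hf].
    + intros a b [Hr _]; exact Hr.
    + intros a Ha. apply filterP_In in Ha. tauto.
  - apply HallCondition_residual; auto.
  - exists (fun a => if decide (In a P0) then g1 a else g2 a). apply IsMatching_glue; auto.
Qed.

(* Without critical subsets, every proper subset has strict surplus, so one
   boy can be married to any of his neighbours and the rest matched by induction. *)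
Lemma HallCondition_remove_one R a L' b :
  HallCondition R (a :: L') -> (forall P0, ~ Critical R (a :: L') P0) ->
  LocallyFinite R (a :: L') -> NoDup (a :: L') ->
  HallCondition (fun x y => R x y /\ y <> b) L'.
Proof.
  intros Hh Hnc Hf Hnd [|q Q0] HQn HQi c' Hc'; [simpl; lia|].
  assert (HQi' : incl (q :: Q0) (a :: L')) by (intros x Hx; right; apply HQi, Hx).
  destruct (Nbhd_finite R (q :: Q0)) as [c Hc]; [eapply LocallyFinite_incl; eauto|].
  assert (length (q :: Q0) <= c)%nat by (eapply Hh; eauto).
  assert (length (q :: Q0) <= length L')%nat by (apply NoDup_incl_length; auto).
  assert (c <> length (q :: Q0)).
  { intros Heq. apply (Hnc (q :: Q0)). repeat split; auto.
    - discriminate.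
    - simpl in *; lia.
    - rewrite <- Heq; auto. }
  assert (c <= c' + 1)%nat.
  { eapply (HasCard_remove_le _ b). exact Hc. eapply HasCard_iff; [|exact Hc'].
    intros y; split.
    - intros [x [Hx [Hr Hne]]]. split; auto. exists x; auto.
    - intros [[x [Hx Hr]] Hne]. exists x. auto. }
  lia.
Qed.

Lemma Matchable_no_critical n R L :
  Matchable n -> (length L <= S n)%nat -> NoDup L -> LocallyFinite R L -> HallCondition R L ->
  (forall P0, ~ Critical R L P0) -> exists g, IsMatching R L g.
Proof.
  intros IH Hlen Hnd Hf Hh Hnc.
  destruct L as [|a L']; [exists default; split; [intros ? []|intros ? ? []]|].
  inversion Hnd as [|? ? HaL' HndL']; subst.
  destruct (Nbhd_finite R [a]) as [c1 Hc1].
  { eapply LocallyFinite_incl; [| |exact Hf]; auto. intros x [<-|[]]; left; auto. }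
  assert (1 <= c1)%nat.
  { apply (Hh [a]); auto.
    - constructor; auto. constructor.
    - intros x [<-|[]]; left; auto. }
  destruct (HasCard_inhabited _ _ Hc1) as [b [a0 [[<-|[]] Hab]]]; [lia|].
  destruct (IH (fun x y => R x y /\ y <> b) L') as [g' [Gr Gi]].
  - simpl in Hlen. lia.
  - auto.
  - eapply LocallyFinite_incl; [| |exact Hf]; [intros x y [Hr _]; exact Hr|intros x Hx; right; auto].
  - eapply HallCondition_remove_one; eauto.
  - exists (fun x => if decide (x = a) then b else g' x). split.
    + intros x [<-|Hx]; destruct (decide _) as [E|E]; try congruence; auto.
      apply Gr; auto.
    + intros x x' Hx Hx'.
      destruct (decide (x = a)) as [E|E]; destruct (decide (x' = a)) as [E'|E']; try congruence.
      * intros Heq. destruct Hx' as [->|Hx']; [contradiction|]. destruct (Gr x' Hx'); congruence.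
      * intros Heq. destruct Hx as [->|Hx]; [contradiction|]. destruct (Gr x Hx); congruence.
      * destruct Hx as [->|Hx]; [contradiction|]. destruct Hx' as [->|Hx']; [contradiction|].
        apply Gi; auto.
Qed.

Theorem hall_marriage n : Matchable n.
Proof.
  induction n as [|n IH]; [exact Matchable_0|].
  intros R L Hlen Hnd Hf Hh.
  destruct (classic (exists P0, Critical R L P0)) as [[P0 HP0]|Hnc].
  - eapply Matchable_critical; eauto.
  - eapply Matchable_no_critical; eauto.
Qed.

End Hall.

Open Scope R_scope.

Lemma pred_ext {X : Type} (A B : X -> Prop) : (forall x, A x <-> B x) -> A = B.
Proof. intros H. apply functional_extensionality. intros x. apply propositional_extensionality, H. Qed.

Fixpoint sumR (n : nat) (f : nat -> R) : R :=
  match n with O => 0 | S k => sumR k f + f k end.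

Lemma sumR_ext n f g : (forall i, (i < n)%nat -> f i = g i) -> sumR n f = sumR n g.
Proof. induction n; simpl; intros H; auto. rewrite IHn, H; auto. Qed.

Section ProbabilityMeasure.
Context {X : Type} (mu : (X -> Prop) -> ereal) (Hm : IsMeasure mu)
  (H1 : mu (fun _ => True) = Fin 1).

Definition mass (A : X -> Prop) : R := match mu A with Fin r => r | PInf => 0 end.

Lemma measure_Fin_mass A : mu A = Fin (mass A) /\ 0 <= mass A <= 1.
Proof.
  destruct Hm as [Hpos [_ Hadd]].
  assert (D : Disjoint A (fun x => ~ A x)) by (intros x [? ?]; auto).
  pose proof (Hadd _ _ D) as E. cbv beta in E.
  rewrite (pred_ext (fun x => A x \/ ~ A x) (fun _ => True)), H1 in E
    by (intros x; split; auto; intros _; apply classic).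
  pose proof (Hpos A) as PA. pose proof (Hpos (fun x => ~ A x)) as PB. unfold mass.
  destruct (mu A) as [r|]; destruct (mu (fun x => ~ A x)) as [r'|]; simpl in E; try discriminate.
  inversion E. split; [reflexivity|lra].
Qed.

Lemma mass_add A B : Disjoint A B -> mass (fun x => A x \/ B x) = mass A + mass B.
Proof.
  intros D. destruct Hm as [_ [_ Hadd]]. unfold mass at 1. rewrite (Hadd _ _ D).
  rewrite (proj1 (measure_Fin_mass A)), (proj1 (measure_Fin_mass B)). reflexivity.
Qed.

Lemma mass_ext A B : (forall x, A x <-> B x) -> mass A = mass B.
Proof. intros H. rewrite (pred_ext A B H). reflexivity. Qed.

Lemma mass_mono A B : (forall x, A x -> B x) -> mass A <= mass B.
Proof.
  intros H. rewrite (mass_ext B (fun x => A x \/ (B x /\ ~ A x))).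
  - rewrite mass_add by (intros x [? [? ?]]; auto).
    pose proof (measure_Fin_mass (fun x => B x /\ ~ A x)). lra.
  - intros x; split; [intros Hb; destruct (classic (A x)); auto|intros [?|[? ?]]; auto].
Qed.

Lemma mass_full : mass (fun _ => True) = 1.
Proof. unfold mass. rewrite H1. reflexivity. Qed.

Lemma mass_disjoint_family (n : nat) (C : nat -> X -> Prop) :
  (forall i i', (i < n)%nat -> (i' < n)%nat -> i <> i' -> Disjoint (C i) (C i')) ->
  mass (fun x => exists i, (i < n)%nat /\ C i x) = sumR n (fun i => mass (C i)).
Proof.
  induction n as [|n IH]; intros D.
  - simpl. rewrite (mass_ext _ (fun _ => False)) by (intros x; split; [intros [i [Hi _]]; lia|intros []]).
    destruct Hm as [_ [H0 _]]. unfold mass. rewrite H0. reflexivity.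
  - simpl. rewrite <- IH by (intros; apply D; lia). rewrite <- mass_add.
    + apply mass_ext. intros x; split.
      * intros [i [Hi Hc]]. destruct (Nat.eq_dec i n) as [->|Hne]; auto.
        left; exists i; split; auto; lia.
      * intros [[i [Hi Hc]]|Hc]; [exists i|exists n]; split; auto.
    + intros x [[i [Hi Hc]] Hc']. apply (D i n ltac:(lia) ltac:(lia) ltac:(lia) x). auto.
Qed.

End ProbabilityMeasure.

Section Representation.
Context {Sg X : Type} (mul : Sg -> Sg -> Sg) (e : Sg) (alpha : Sg -> X -> option X)
  (HS : IsInverseSemigroup mul) (Ha : IsRepresentation mul e alpha).

(* Take for [t] the inverse of [s]: [s t s = s] makes [alpha_t] undo [alpha_s]. *)
Lemma representation_partial_inverse s :
  exists t, forall x y, alpha s x = Some y -> alpha t y = Some x.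
Proof.
  destruct HS as [_ Hinv], Ha as [Hpb [Hhom _]].
  destruct (Hinv s) as [t [[H1 _] _]]. exists t. intros x y Hxy.
  assert (E : alpha (mul (mul s t) s) x = Some y) by (rewrite H1; auto).
  rewrite Hhom in E. unfold pcomp in E. rewrite Hxy, Hhom in E. unfold pcomp in E.
  destruct (alpha t y) as [w|] eqn:Ew; [|discriminate].
  f_equal. eapply Hpb; eauto.
Qed.

End Representation.

Lemma DomainMeasurable_not_Paradoxical {Sg X : Type} (alpha : Sg -> X -> option X) :
  DomainMeasurable alpha (fun _ => True) -> ~ Paradoxical alpha (fun _ => True).
Proof.
  intros [mu [Hm [H1 Hinv]]]
    [n [m [As [Bs [s [t [HA [HB [HcA [HdA [HcB [HdB [_ [_ [DA [DB DAB]]]]]]]]]]]]]]]].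
  assert (Hi : forall u B, Subset B (Dom alpha u) -> mass mu B = mass mu (Img alpha u B)).
  { intros u B HBs. unfold mass. rewrite (Hinv u B HBs). reflexivity. }
  assert (E1 : 1 = sumR n (fun i => mass mu (As i))).
  { rewrite <- (mass_full mu H1).
    rewrite (mass_ext mu _ (fun x => exists i, (i < n)%nat /\ Img alpha (s i) (As i) x)) by apply HcA.
    rewrite mass_disjoint_family by auto. apply sumR_ext. intros i Hi'. symmetry. apply Hi, HA, Hi'. }
  assert (E2 : 1 = sumR m (fun j => mass mu (Bs j))).
  { rewrite <- (mass_full mu H1).
    rewrite (mass_ext mu _ (fun x => exists j, (j < m)%nat /\ Img alpha (t j) (Bs j) x)) by apply HcB.
    rewrite mass_disjoint_family by auto. apply sumR_ext. intros j Hj. symmetry. apply Hi, HB, Hj. }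
  assert (E3 : mass mu (fun x => (exists i, (i < n)%nat /\ As i x) \/
                                 (exists j, (j < m)%nat /\ Bs j x)) <= 1).
  { rewrite <- (mass_full mu H1). apply mass_mono; auto. }
  rewrite mass_add, !mass_disjoint_family in E3; auto.
  - lra.
  - intros x [[i [Hi' Ha]] [j [Hj Hb]]]. exact (DAB i j Hi' Hj x (conj Ha Hb)).
Qed.

Lemma ultrafilter_cofinite_nat :
  exists U : (nat -> Prop) -> Prop, IsUltra U /\ forall N, U (fun n => (N <= n)%nat).
Proof.
  destruct (ultrafilter_extends nat (fun A => exists N, forall n, (N <= n)%nat -> A n))
    as [U [HU Hb]].
  - exists 0%nat. auto.
  - intros A B [N1 H1] [N2 H2]. exists (N1 + N2)%nat. intros n Hn. split; [apply H1|apply H2]; lia.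
  - intros A B H [N HN]. exists N. auto.
  - intros [N HN]. apply (HN N). lia.
  - exists U. split; auto. intros N. apply Hb. exists N. auto.
Qed.

Section UltraLimit.
Context (U : (nat -> Prop) -> Prop) (HU : IsUltra U) (Hcof : forall N, U (fun n => (N <= n)%nat)).

Definition ulim_to (a : nat -> R) (L : R) : Prop :=
  forall eps, 0 < eps -> U (fun n => Rabs (a n - L) < eps).

Lemma ultra_full : U (fun _ => True).
Proof. destruct HU as [_ [Hm _]]. eapply Hm; [|apply (Hcof 0%nat)]. auto. Qed.

(* The limit is the supremum of the [r] such that [r <= a n] for U-almost every [n]. *)
Lemma ulim_to_exists a : (forall n, 0 <= a n <= 1) -> exists L, ulim_to a L.
Proof.
  intros Hb. destruct HU as [HI [Hm [_ Hu]]].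
  set (E := fun r => U (fun n => r <= a n)).
  assert (Hbd : bound E).
  { exists 1. intros r Hr. destruct (Rle_dec r 1) as [Hr1|Hr1]; auto. exfalso.
    destruct (ultra_inhabited U HU _ Hr) as [n Hn]. specialize (Hb n). lra. }
  assert (Hne : exists r, E r).
  { exists 0. unfold E. eapply Hm; [|apply ultra_full]. intros n _. apply Hb. }
  destruct (completeness E Hbd Hne) as [L [HL1 HL2]].
  exists L. intros eps Heps.
  assert (Ua : U (fun n => L - eps < a n)).
  { apply NNPP. intros Hn.
    assert (Hub : is_upper_bound E (L - eps)).
    { intros r Hr. destruct (Rle_dec r (L - eps)) as [Hr1|Hr1]; auto. exfalso. apply Hn.
      eapply Hm; [|exact Hr]. intros n Hrn. simpl in Hrn. lra. }
    specialize (HL2 _ Hub). lra. }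
  assert (Ub : U (fun n => a n < L + eps)).
  { destruct (Hu (fun n => a n < L + eps)) as [?|Hn]; auto.
    assert (HE : E (L + eps)). { eapply Hm; [|exact Hn]. intros n Hnn. simpl in Hnn. lra. }
    specialize (HL1 _ HE). lra. }
  eapply Hm; [|exact (HI _ _ Ua Ub)]. intros n [? ?]. apply Rabs_def1; lra.
Qed.

Lemma ulim_to_unique a L M : ulim_to a L -> ulim_to a M -> L = M.
Proof.
  intros HL HM. destruct (Req_dec L M) as [|Hne]; auto. exfalso.
  set (eps := Rabs (L - M) / 2).
  assert (Heps : 0 < eps) by (assert (0 < Rabs (L - M)) by (apply Rabs_pos_lt; lra); unfold eps; lra).
  destruct HU as [HI _].
  destruct (ultra_inhabited U HU _ (HI _ _ (HL eps Heps) (HM eps Heps))) as [n [H1 H2]].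
  assert (Rabs (L - M) <= Rabs (a n - L) + Rabs (a n - M)).
  { replace (L - M) with (-(a n - L) + (a n - M)) by ring.
    eapply Rle_trans; [apply Rabs_triang|]. rewrite Rabs_Ropp. lra. }
  unfold eps in *. lra.
Qed.

Lemma ulim_to_add a b L M : ulim_to a L -> ulim_to b M -> ulim_to (fun n => a n + b n) (L + M).
Proof.
  intros HL HM eps Heps. destruct HU as [HI [Hm _]].
  eapply Hm; [|exact (HI _ _ (HL (eps/2) ltac:(lra)) (HM (eps/2) ltac:(lra)))].
  intros n [H1 H2]. replace (a n + b n - (L + M)) with ((a n - L) + (b n - M)) by ring.
  eapply Rle_lt_trans; [apply Rabs_triang|]. lra.
Qed.

Lemma ulim_to_const c : ulim_to (fun _ => c) c.
Proof.
  intros eps Heps. destruct HU as [_ [Hm _]]. eapply Hm; [|apply ultra_full].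
  intros n _. rewrite Rminus_diag, Rabs_R0. exact Heps.
Qed.

Lemma ulim_to_asymp a b L :
  ulim_to a L ->
  (forall eps, 0 < eps -> exists N, forall n, (N <= n)%nat -> Rabs (a n - b n) < eps) ->
  ulim_to b L.
Proof.
  intros HL Hc eps Heps. destruct HU as [HI [Hm _]].
  destruct (Hc (eps/2) ltac:(lra)) as [N HN].
  eapply Hm; [|exact (HI _ _ (HL (eps/2) ltac:(lra)) (Hcof N))].
  intros n [H1 H2]. specialize (HN n H2).
  replace (b n - L) with (-(a n - b n) + (a n - L)) by ring.
  eapply Rle_lt_trans; [apply Rabs_triang|]. rewrite Rabs_Ropp. lra.
Qed.

Lemma ulim_to_ext a b L : (forall n, a n = b n) -> ulim_to a L -> ulim_to b L.
Proof.
  intros Hab HL. apply (ulim_to_asymp a); auto.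
  intros eps Heps. exists 0%nat. intros n _. rewrite Hab, Rminus_diag, Rabs_R0. exact Heps.
Qed.

Lemma ulim_to_nonneg a L : (forall n, 0 <= a n) -> ulim_to a L -> 0 <= L.
Proof.
  intros Ha HL. destruct (Rle_dec 0 L) as [|Hn]; auto. exfalso.
  destruct (ultra_inhabited U HU _ (HL (- L) ltac:(lra))) as [n Hn'].
  specialize (Ha n). apply Rabs_def2 in Hn'. lra.
Qed.

Definition ulim (a : nat -> R) : R :=
  match decide (exists L, ulim_to a L) with
  | left h => proj1_sig (constructive_indefinite_description _ h)
  | right _ => 0
  end.

Lemma ulim_eq a L : ulim_to a L -> ulim a = L.
Proof.
  intros H. unfold ulim. destruct (decide (exists L, ulim_to a L)) as [h|h].
  - apply (ulim_to_unique a); auto. exact (proj2_sig (constructive_indefinite_description _ h)).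
  - exfalso. apply h. eauto.
Qed.

End UltraLimit.

Definition Boundary {Sg X : Type} (alpha : Sg -> X -> option X) (s : Sg) (F : list X) : X -> Prop :=
  fun y => Img alpha s (fun x => In x F /\ Dom alpha s x) y /\ ~ In y F.

Section BoundaryCount.
Context {Sg X : Type} (alpha : Sg -> X -> option X) (Hpb : forall s, PartialBijection (alpha s))
  (s t : Sg) (Hst : forall x y, alpha s x = Some y -> alpha t y = Some x)
  (B : X -> Prop) (HB : Subset B (Dom alpha s)) (F : list X) (HF : NoDup F).

Lemma count_le_count_Img k : HasCard (Boundary alpha s F) k ->
  (length (filterP B F) <= length (filterP (Img alpha s B) F) + k)%nat.
Proof.
  intros Hk.
  assert (HQ : HasCard (fun y => exists x, (In x F /\ B x) /\ alpha s x = Some y)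
                 (length (filterP B F))).
  { apply HasCard_injective_image; [apply Hpb|intros x [_ Hx]; apply HB, Hx|apply HasCard_filterP, HF]. }
  destruct (HasCard_bounded _ _ Hk) as [lb Hlb].
  destruct (HasCard_of_bounded (fun y => (In y F /\ Img alpha s B y) \/ Boundary alpha s F y)
              (F ++ lb)) as [c Hc].
  { intros y [[? ?]|?]; apply in_or_app; auto. }
  assert (length (filterP B F) <= c)%nat.
  { eapply HasCard_le; [|exact HQ|exact Hc]. intros y [x [[Hx Hb] Hy]].
    destruct (classic (In y F)).
    - left. split; [auto|exists x; auto].
    - right. split; [|auto]. exists x. repeat split; eauto. }
  assert (c <= length (filterP (Img alpha s B) F) + k)%nat
    by (eapply HasCard_union_le; [apply HasCard_filterP, HF|exact Hk|exact Hc]).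
  lia.
Qed.

Lemma count_Img_le_count k : HasCard (Boundary alpha t F) k ->
  (length (filterP (Img alpha s B) F) <= length (filterP B F) + k)%nat.
Proof.
  intros Hk.
  assert (HQ : HasCard (fun x => exists y, (In y F /\ Img alpha s B y) /\ alpha t y = Some x)
                 (length (filterP (Img alpha s B) F))).
  { apply HasCard_injective_image; [apply Hpb| |apply HasCard_filterP, HF].
    intros y [_ [x [_ Hx]]]. exists x. apply Hst, Hx. }
  destruct (HasCard_bounded _ _ Hk) as [lb Hlb].
  destruct (HasCard_of_bounded (fun y => (In y F /\ B y) \/ Boundary alpha t F y) (F ++ lb))
    as [c Hc].
  { intros y [[? ?]|?]; apply in_or_app; auto. }
  assert (length (filterP (Img alpha s B) F) <= c)%nat.
  { eapply HasCard_le; [|exact HQ|exact Hc]. intros x [y [[Hy [x' [Hb Hx']]] Hyx]].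
    assert (x' = x) by (apply Hst in Hx'; congruence). subst x'.
    destruct (classic (In x F)).
    - left. split; auto.
    - right. split; [|auto]. exists y. split; [split; [auto|exists x; auto]|auto]. }
  assert (c <= length (filterP B F) + k)%nat
    by (eapply HasCard_union_le; [apply HasCard_filterP, HF|exact Hk|exact Hc]).
  lia.
Qed.

End BoundaryCount.

Lemma Rdiv_close (a b k1 k2 l eps : R) :
  0 < l -> a <= b + k1 -> b <= a + k2 -> k1 / l < eps -> k2 / l < eps -> Rabs (a / l - b / l) < eps.
Proof.
  intros Hl H1 H2 Hk1 Hk2.
  assert (Hl' : 0 <= / l) by (left; apply Rinv_0_lt_compat, Hl).
  assert (a / l - b / l <= k1 / l)
    by (unfold Rdiv; rewrite <- Rmult_minus_distr_r; apply Rmult_le_compat_r; lra).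
  assert (b / l - a / l <= k2 / l)
    by (unfold Rdiv; rewrite <- Rmult_minus_distr_r; apply Rmult_le_compat_r; lra).
  apply Rabs_def1; lra.
Qed.

Section FolnerDensity.
Context {Sg X : Type} (mul : Sg -> Sg -> Sg) (e : Sg) (alpha : Sg -> X -> option X)
  (HS : IsInverseSemigroup mul) (Ha : IsRepresentation mul e alpha)
  (F : nat -> list X) (HF : forall n, NoDup (F n) /\ F n <> nil)
  (Hfol : forall s (eps : R), 0 < eps -> exists N : nat, forall n : nat, (N <= n)%nat ->
     exists k : nat, HasCard (Boundary alpha s (F n)) k /\ INR k / INR (length (F n)) < eps).

Definition density (A : X -> Prop) (n : nat) : R :=
  INR (length (filterP A (F n))) / INR (length (F n)).

Lemma length_F_pos n : 0 < INR (length (F n)).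
Proof.
  destruct (HF n) as [_ Hne]. apply lt_0_INR. destruct (F n); [contradiction|simpl; lia].
Qed.

Lemma density_bounds A n : 0 <= density A n <= 1.
Proof.
  pose proof (length_F_pos n). pose proof (le_INR _ _ (filterP_length_le A (F n))).
  unfold density, Rdiv. split.
  - apply Rmult_le_pos; [apply pos_INR|left; apply Rinv_0_lt_compat; auto].
  - apply Rmult_le_reg_r with (INR (length (F n))); auto.
    rewrite Rmult_assoc, Rinv_l; lra.
Qed.

Lemma density_count (A : X -> Prop) n c :
  HasCard (fun x => In x (F n) /\ A x) c -> density A n = INR c / INR (length (F n)).
Proof.
  intros Hc. unfold density. f_equal. f_equal.
  eapply HasCard_unique; [apply HasCard_filterP, HF|exact Hc].
Qed.

Lemma density_empty n : density (fun _ => False) n = 0.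
Proof.
  rewrite (density_count _ n 0); [apply Rdiv_0_l|].
  exists []. split; [constructor|split; [|reflexivity]].
  intros x. split; [intros []|intros [_ []]].
Qed.

Lemma density_full n : density (fun _ => True) n = 1.
Proof.
  pose proof (length_F_pos n).
  rewrite (density_count _ n (length (F n))); [field; lra|].
  eapply HasCard_iff; [|apply HasCard_NoDup, HF]. tauto.
Qed.

Lemma density_add A B n :
  Disjoint A B -> density (fun x => A x \/ B x) n = density A n + density B n.
Proof.
  intros D. rewrite (density_count _ n (length (filterP A (F n)) + length (filterP B (F n)))).
  - rewrite plus_INR. unfold density, Rdiv. ring.
  - eapply HasCard_iff; [|apply HasCard_disjoint_union; [|apply HasCard_filterP, HF|apply HasCard_filterP, HF]].
    + intros x. tauto.
    + intros x [[_ ?] [_ ?]]. apply (D x); auto.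
Qed.

Lemma density_Img_asymp s B : Subset B (Dom alpha s) ->
  forall eps, 0 < eps -> exists N, forall n, (N <= n)%nat ->
  Rabs (density B n - density (Img alpha s B) n) < eps.
Proof.
  intros HB eps Heps.
  destruct (representation_partial_inverse mul e alpha HS Ha s) as [t Hst].
  destruct Ha as [Hpb _].
  destruct (Hfol s eps Heps) as [N1 HN1], (Hfol t eps Heps) as [N2 HN2].
  exists (N1 + N2)%nat. intros n Hn.
  destruct (HN1 n ltac:(lia)) as [k1 [Hk1 Hr1]], (HN2 n ltac:(lia)) as [k2 [Hk2 Hr2]].
  pose proof (count_le_count_Img alpha Hpb s B HB (F n) (proj1 (HF n)) k1 Hk1) as C1.
  pose proof (count_Img_le_count alpha Hpb s t Hst B (F n) (proj1 (HF n)) k2 Hk2) as C2.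
  apply le_INR in C1, C2. rewrite plus_INR in C1, C2.
  eapply Rdiv_close; eauto. apply length_F_pos.
Qed.

End FolnerDensity.

Lemma DomainFolner_DomainMeasurable {Sg X : Type} (mul : Sg -> Sg -> Sg) (e : Sg)
  (alpha : Sg -> X -> option X) :
  IsInverseSemigroup mul -> IsRepresentation mul e alpha ->
  DomainFolner alpha (fun _ => True) -> DomainMeasurable alpha (fun _ => True).
Proof.
  intros HS Ha [F [HF Hfol]].
  assert (HF' : forall n, NoDup (F n) /\ F n <> nil) by (intros n; split; apply HF).
  destruct ultrafilter_cofinite_nat as [U [HU Hcof]].
  set (d := density F).
  assert (Hd : forall A, ulim_to U (d A) (ulim U (d A))).
  { intros A. destruct (ulim_to_exists U HU Hcof (d A) (density_bounds F HF' A)) as [L HL].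
    rewrite (ulim_eq U HU (d A) L HL). exact HL. }
  exists (fun A => Fin (ulim U (d A))). split; [split; [|split]|split].
  - intros A. apply (ulim_to_nonneg U HU (d A)); [intros n; apply density_bounds, HF'|apply Hd].
  - f_equal. apply (ulim_eq U HU).
    apply (ulim_to_ext U HU Hcof (fun _ => 0)); [intros n; symmetry; apply density_empty, HF'|].
    apply ulim_to_const; auto.
  - intros A B D. simpl. f_equal. apply (ulim_eq U HU).
    apply (ulim_to_ext U HU Hcof (fun n => d A n + d B n)).
    + intros n. symmetry. apply density_add; auto.
    + apply ulim_to_add; auto.
  - f_equal. apply (ulim_eq U HU).
    apply (ulim_to_ext U HU Hcof (fun _ => 1)); [intros n; symmetry; apply density_full, HF'|].
    apply ulim_to_const; auto.
  - intros s B HB. f_equal. symmetry. apply (ulim_eq U HU).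
    apply (ulim_to_asymp U HU Hcof (d B)); [apply Hd|].
    exact (density_Img_asymp mul e alpha HS Ha F HF' Hfol s B HB).
Qed.

Lemma DomainFolner_of_almost_invariant {Sg X : Type} (alpha : Sg -> X -> option X)
  (f : nat -> Sg) (Hf : forall s, exists n, f n = s) :
  (forall N, exists l, NoDup l /\ l <> [] /\ forall k, (k <= N)%nat ->
     exists c, HasCard (Boundary alpha (f k) l) c /\ ((N + 1) * c < length l)%nat) ->
  DomainFolner alpha (fun _ => True).
Proof.
  intros Hg. destruct (choice _ Hg) as [F HF].
  exists F. split.
  - intros n. destruct (HF n) as [? [? _]]. auto.
  - intros s eps Heps. destruct (Hf s) as [k <-].
    destruct (INR_archimed eps 1 Heps) as [N0 HN0].
    exists (N0 + k)%nat. intros n Hn.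
    destruct (HF n) as [_ [_ Hb]]. destruct (Hb k ltac:(lia)) as [c [Hc Hlt]].
    exists c. split; [exact Hc|].
    apply lt_INR in Hlt. rewrite mult_INR, plus_INR in Hlt. simpl in Hlt.
    assert (INR N0 <= INR n) by (apply le_INR; lia).
    assert (0 <= INR c) by apply pos_INR.
    assert (0 < INR (length (F n))) by (pose proof (pos_INR n); nra).
    assert (1 <= eps * (INR n + 1)) by nra.
    assert (INR c <= eps * (INR n + 1) * INR c) by nra.
    assert (eps * ((INR n + 1) * INR c) < eps * INR (length (F n))) by (apply Rmult_lt_compat_l; auto).
    apply Rmult_lt_reg_r with (INR (length (F n))); auto.
    unfold Rdiv. rewrite Rmult_assoc, Rinv_l by lra. nra.
Qed.

Lemma Boundary_finite {Sg X : Type} (alpha : Sg -> X -> option X) s l :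
  exists c, HasCard (Boundary alpha s l) c.
Proof.
  apply (HasCard_of_bounded _
    (flat_map (fun x => match alpha s x with Some y => [y] | None => [] end) l)).
  intros y [[x [[Hx _] Hy]] _]. apply in_flat_map. exists x. rewrite Hy. split; [auto|left; auto].
Qed.

Lemma not_DomainFolner_uniform_boundary {Sg X : Type} (alpha : Sg -> X -> option X)
  (f : nat -> Sg) (Hf : forall s, exists n, f n = s) :
  ~ DomainFolner alpha (fun _ => True) ->
  exists N, forall l, NoDup l -> l <> [] -> exists k, (k <= N)%nat /\
    forall c, HasCard (Boundary alpha (f k) l) c -> (length l <= (N + 1) * c)%nat.
Proof.
  intros Hnf. apply NNPP. intros Hn. apply Hnf, (DomainFolner_of_almost_invariant alpha f Hf).
  intros N. apply NNPP. intros H2. apply Hn. exists N. intros l Hl Hne. apply NNPP. intros H3. apply H2.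
  exists l. split; [auto|split; [auto|]]. intros k Hk. destruct (Boundary_finite alpha (f k) l) as [c Hc].
  exists c. split; auto. destruct (Nat.lt_ge_cases ((N + 1) * c) (length l)) as [|Hge]; auto.
  exfalso. apply H3. exists k. split; auto. intros c' Hc'. rewrite (HasCard_unique _ _ _ Hc' Hc). lia.
Qed.

Definition Images {Sg X : Type} (alpha : Sg -> X -> option X) (W : list Sg) (P : X -> Prop)
  : X -> Prop :=
  fun y => exists w x, In w W /\ P x /\ alpha w x = Some y.

Definition images_list {Sg X : Type} (alpha : Sg -> X -> option X) (W : list Sg) (y : X) : list X :=
  flat_map (fun w => match alpha w y with Some x => [x] | None => [] end) W.

Lemma In_images_list {Sg X : Type} (alpha : Sg -> X -> option X) W y x :
  In x (images_list alpha W y) <-> exists w, In w W /\ alpha w y = Some x.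
Proof.
  unfold images_list. rewrite in_flat_map. split.
  - intros [w [Hw Hx]]. destruct (alpha w y) eqn:E; [|destruct Hx].
    destruct Hx as [<-|[]]. eauto.
  - intros [w [Hw Hx]]. exists w. rewrite Hx. split; [auto|left; auto].
Qed.

Lemma Images_finite {Sg X : Type} (alpha : Sg -> X -> option X) W (P : X -> Prop) k :
  HasCard P k -> exists c, HasCard (Images alpha W P) c.
Proof.
  intros HP. destruct (HasCard_bounded _ _ HP) as [l Hl].
  apply (HasCard_of_bounded _ (flat_map (images_list alpha W) l)).
  intros y [w [x [Hw [Hx Hy]]]]. apply in_flat_map. exists x. split; auto.
  apply In_images_list. eauto.
Qed.

Lemma bernoulli_nat a m : (a ^ S m + m * a ^ m <= a * (a + 1) ^ m)%nat.
Proof.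
  induction m as [|m IH]; simpl; [lia|].
  rewrite Nat.pow_succ_r' in *. simpl in *. nia.
Qed.

Lemma pow_succ_doubling N : (2 * (N + 1) ^ S N <= (N + 2) ^ S N)%nat.
Proof.
  pose proof (bernoulli_nat (N + 1) (S N)) as B.
  replace (N + 1 + 1)%nat with (N + 2)%nat in B by lia.
  rewrite Nat.pow_succ_r' in B. nia.
Qed.

Section Expansion.
Context {Sg X : Type} (mul : Sg -> Sg -> Sg) (e : Sg) (alpha : Sg -> X -> option X)
  (Ha : IsRepresentation mul e alpha) (f : nat -> Sg) (N : nat)
  (HN : forall l, NoDup l -> l <> [] -> exists k, (k <= N)%nat /\
    forall c, HasCard (Boundary alpha (f k) l) c -> (length l <= (N + 1) * c)%nat).

Definition generators : list Sg := e :: map f (seq 0 (S N)).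

Fixpoint words (m : nat) : list Sg :=
  match m with
  | O => [e]
  | S m' => flat_map (fun u => map (mul u) (words m')) generators
  end.

Lemma Images_words_0 P y : Images alpha (words 0) P y <-> P y.
Proof.
  destruct Ha as [_ [_ He]]. split.
  - intros [w [x [[<-|[]] [Hx Hy]]]]. rewrite He in Hy. congruence.
  - intros Hy. exists e, y. split; [left; auto|split; auto].
Qed.

Lemma Images_words_S m P y :
  Images alpha (words (S m)) P y <-> Images alpha generators (Images alpha (words m) P) y.
Proof.
  destruct Ha as [_ [Hh _]]. cbn [words]. split.
  - intros [w' [x [Hw' [Hx Hy]]]]. apply in_flat_map in Hw'. destruct Hw' as [u [Hu Hw']].
    apply in_map_iff in Hw'. destruct Hw' as [w [<- Hw]].
    rewrite Hh in Hy. unfold pcomp in Hy. destruct (alpha w x) as [z|] eqn:Ez; [|discriminate].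
    exists u, z. repeat split; auto. exists w, x. auto.
  - intros [u [z [Hu [[w [x [Hw [Hx Hz]]]] Hy]]]]. exists (mul u w), x. split.
    + apply in_flat_map. exists u. split; auto. apply in_map; auto.
    + split; auto. rewrite Hh. unfold pcomp. rewrite Hz. auto.
Qed.

(* [P] and the boundary of [P] for a suitable [f k] are disjoint parts of [generators . P]. *)
Lemma Images_generators_card P k : HasCard P k ->
  exists c, HasCard (Images alpha generators P) c /\ ((N + 2) * k <= (N + 1) * c)%nat.
Proof.
  intros HP. destruct (Images_finite alpha generators P k HP) as [c Hc]. exists c. split; auto.
  destruct k as [|k]; [lia|].
  destruct HP as [l [Hln [Hli Hll]]].
  destruct (HN l Hln) as [k0 [Hk0 Hk0']]; [intros E; subst; discriminate|].
  destruct (Boundary_finite alpha (f k0) l) as [c0 Hc0]. specialize (Hk0' c0 Hc0).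
  assert (Hu : HasCard (fun y => P y \/ Boundary alpha (f k0) l y) (S k + c0)).
  { apply HasCard_disjoint_union; auto.
    - intros y [Hy [_ Hn]]. apply Hn, Hli, Hy.
    - exists l; auto. }
  assert (S k + c0 <= c)%nat.
  { eapply HasCard_le; [|exact Hu|exact Hc]. destruct Ha as [_ [_ He]].
    intros y [Hy|[[x [[Hx _] Hxy]] _]].
    - exists e, y. split; [left; auto|split; auto].
    - exists (f k0), x. split; [right; apply in_map, in_seq; lia|split; auto]. apply Hli; auto. }
  rewrite Hll in Hk0'. nia.
Qed.

Lemma Images_words_card m : forall P k, HasCard P k ->
  exists c, HasCard (Images alpha (words m) P) c /\ ((N + 2) ^ m * k <= (N + 1) ^ m * c)%nat.
Proof.
  induction m as [|m IH]; intros P k HP.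
  - exists k. split; [|simpl; lia]. eapply HasCard_iff; [|exact HP].
    intros y; rewrite Images_words_0; tauto.
  - destruct (IH P k HP) as [c [Hc Hle]].
    destruct (Images_generators_card _ _ Hc) as [c' [Hc' Hle']].
    exists c'. split.
    + eapply HasCard_iff; [|exact Hc']. intros y. rewrite Images_words_S. tauto.
    + rewrite !Nat.pow_succ_r'. nia.
Qed.

Lemma Images_words_doubling P k c :
  HasCard P k -> HasCard (Images alpha (words (S N)) P) c -> (2 * k <= c)%nat.
Proof.
  intros HP Hc. destruct (Images_words_card (S N) P k HP) as [c' [Hc' Hle]].
  rewrite (HasCard_unique _ _ _ Hc Hc').
  pose proof (pow_succ_doubling N).
  assert (0 < (N + 1) ^ S N)%nat by (apply Nat.neq_0_lt_0, Nat.pow_nonzero; lia).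
  nia.
Qed.

End Expansion.

Lemma ultra_pointwise_choice {T Y Z : Type} (U : (T -> Prop) -> Prop) (HU : IsUltra U)
  (g : T -> Y -> Z) (cands : Y -> list Z) (D : Y -> T -> Prop) :
  (forall y, U (D y)) -> (forall y E, D y E -> In (g E y) (cands y)) ->
  exists h : Y -> Z, forall y, In (h y) (cands y) /\ U (fun E => D y E /\ g E y = h y).
Proof.
  intros HD Hg. apply (choice (fun y z => In z (cands y) /\ U (fun E => D y E /\ g E y = z))).
  intros y.
  apply (ultra_finite_union U HU (cands y) (fun z E => D y E /\ g E y = z)).
  destruct HU as [_ [Hm _]]. eapply Hm; [|exact (HD y)].
  intros E HE. exists (g E y). auto.
Qed.

Lemma length_le_double {X : Type} (L : list (X * bool)) (l : list X) :
  NoDup L -> (forall yb, In yb L -> In (fst yb) l) -> (length L <= 2 * length l)%nat.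
Proof.
  intros HL Hl.
  replace (2 * length l)%nat
    with (length (map (fun y => (y, true)) l ++ map (fun y => (y, false)) l))
    by (rewrite length_app, !length_map; lia).
  apply NoDup_incl_length; auto.
  intros [y b] Hyb. apply in_or_app. specialize (Hl _ Hyb).
  destruct b; [left|right]; apply in_map_iff; exists y; auto.
Qed.

Section TwoToOne.
Context {Sg X : Type} (alpha : Sg -> X -> option X) (W : list Sg)
  (Hexp : forall P k c, HasCard P k -> HasCard (Images alpha W P) c -> (2 * k <= c)%nat).

Definition step_rel (yb : X * bool) (x : X) : Prop := In x (images_list alpha W (fst yb)).

Definition doubled (E : list X) : list (X * bool) :=
  flat_map (fun y => [(y, true); (y, false)]) (nodup eq_dec_classical E).

Lemma In_doubled E y b : In (y, b) (doubled E) <-> In y E.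
Proof.
  unfold doubled. rewrite in_flat_map. split.
  - intros [y' [Hy' Hin]]. apply nodup_In in Hy'.
    destruct Hin as [E1|[E1|[]]]; inversion E1; subst; auto.
  - intros Hy. exists y. split; [apply nodup_In; auto|destruct b; simpl; auto].
Qed.

Lemma NoDup_doubled E : NoDup (doubled E).
Proof.
  unfold doubled. generalize (NoDup_nodup eq_dec_classical E).
  generalize (nodup eq_dec_classical E) as l. induction l as [|y l IH]; intros Hnd; [constructor|].
  inversion Hnd; subst. simpl.
  assert (Hnot : forall b, ~ In (y, b) (flat_map (fun y => [(y, true); (y, false)]) l)).
  { intros b Hin. apply in_flat_map in Hin. destruct Hin as [y' [? [E1|[E1|[]]]]]; inversion E1; subst; auto. }
  constructor; [intros [E1|Hin]; [discriminate|exact (Hnot _ Hin)]|].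
  constructor; [exact (Hnot false)|auto].
Qed.

(* Each boy [(y, b)] of the doubled list wants one of the images of [y]; the
   doubling property of [W] is exactly Hall's condition. *)
Lemma HallCondition_doubled E : HallCondition step_rel (doubled E).
Proof.
  intros Pd HPn HPi c Hc.
  destruct (HasCard_of_bounded (fun y => In y (map fst Pd)) (map fst Pd)) as [k' [l' [Hl'n [Hl'i Hl'l]]]];
    auto.
  assert (length Pd <= 2 * k')%nat.
  { rewrite <- Hl'l. apply length_le_double; auto.
    intros yb Hyb. apply Hl'i, in_map, Hyb. }
  assert (2 * k' <= c)%nat.
  { apply (Hexp (fun y => In y l')); [exists l'; split; [auto|split; [intros; tauto|auto]]|].
    eapply HasCard_iff; [|exact Hc]. intros x. split.
    - intros [[y b] [Hyb Hx]]. apply In_images_list in Hx. destruct Hx as [w [Hw Hx]].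
      exists w, y. repeat split; auto. apply Hl'i, in_map_iff. exists (y, b); auto.
    - intros [w [y [Hw [Hy Hx]]]]. apply Hl'i, in_map_iff in Hy.
      destruct Hy as [[y' b] [E1 Hin]]. simpl in E1. subst y'.
      exists (y, b). split; auto. apply In_images_list. eauto. }
  lia.
Qed.

Lemma two_to_one_finite (E : list X) : exists pq : (X -> X) * (X -> X),
  (forall y, In y E -> In (fst pq y) (images_list alpha W y) /\ In (snd pq y) (images_list alpha W y)) /\
  (forall y y', In y E -> In y' E -> fst pq y = fst pq y' -> y = y') /\
  (forall y y', In y E -> In y' E -> snd pq y = snd pq y' -> y = y') /\
  (forall y y', In y E -> In y' E -> fst pq y <> snd pq y').
Proof.
  destruct (hall_marriage fst (length (doubled E)) step_rel (doubled E)) as [g [Gr Gi]].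
  - lia.
  - apply NoDup_doubled.
  - intros yb _. exists (images_list alpha W (fst yb)). auto.
  - apply HallCondition_doubled.
  - exists (fun y => g (y, true), fun y => g (y, false)). simpl.
    assert (HE : forall y b, In y E -> In (y, b) (doubled E)) by (intros; apply In_doubled; auto).
    repeat split.
    + apply (Gr (y, true)), HE; auto.
    + apply (Gr (y, false)), HE; auto.
    + intros y y' Hy Hy' Heq. apply Gi in Heq; auto. congruence.
    + intros y y' Hy Hy' Heq. apply Gi in Heq; auto. congruence.
    + intros y y' Hy Hy' Heq. apply Gi in Heq; auto. congruence.
Qed.

(* Compactness: pass to the limit of the finite solutions along an ultrafilter
   on finite subsets of [X]; each value has finitely many candidates. *)
Lemma two_to_one_global : exists p q : X -> X,
  (forall y, In (p y) (images_list alpha W y) /\ In (q y) (images_list alpha W y)) /\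
  (forall y y', p y = p y' -> y = y') /\
  (forall y y', q y = q y' -> y = y') /\
  (forall y y', p y <> q y').
Proof.
  destruct (choice _ two_to_one_finite) as [PQ HPQ].
  destruct (ultrafilter_extends (list X) (fun Z => exists E0, forall E, incl E0 E -> Z E))
    as [U [HU Hb]].
  - exists []. auto.
  - intros A B [E1 H1] [E2 H2]. exists (E1 ++ E2). intros E HE. split.
    + apply H1. intros x Hx; apply HE, in_or_app; auto.
    + apply H2. intros x Hx; apply HE, in_or_app; auto.
  - intros A B H [E0 HE]. exists E0. auto.
  - intros [E0 HE]. apply (HE E0). intros x; auto.
  - assert (Uy : forall y, U (fun E => In y E)).
    { intros y. apply Hb. exists [y]. intros E HE. apply HE. left; auto. }
    destruct (ultra_pointwise_choice U HU (fun E => fst (PQ E)) (images_list alpha W)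
                (fun y E => In y E) Uy) as [p Hp]; [intros y E HyE; apply HPQ, HyE|].
    destruct (ultra_pointwise_choice U HU (fun E => snd (PQ E)) (images_list alpha W)
                (fun y E => In y E) Uy) as [q Hq]; [intros y E HyE; apply HPQ, HyE|].
    assert (HI : forall A B, U A -> U B -> U (fun x => A x /\ B x)) by apply HU.
    exists p, q. split; [|split; [|split]].
    + intros y. split; [apply Hp|apply Hq].
    + intros y y' Heq.
      destruct (ultra_inhabited U HU _ (HI _ _ (proj2 (Hp y)) (proj2 (Hp y')))) as [E [[Hy E1] [Hy' E2]]].
      apply (proj1 (proj2 (HPQ E))); auto. congruence.
    + intros y y' Heq.
      destruct (ultra_inhabited U HU _ (HI _ _ (proj2 (Hq y)) (proj2 (Hq y')))) as [E [[Hy E1] [Hy' E2]]].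
      apply (proj1 (proj2 (proj2 (HPQ E)))); auto. congruence.
    + intros y y' Heq.
      destruct (ultra_inhabited U HU _ (HI _ _ (proj2 (Hp y)) (proj2 (Hq y')))) as [E [[Hy E1] [Hy' E2]]].
      apply (proj2 (proj2 (proj2 (HPQ E))) y y'); auto. congruence.
Qed.

End TwoToOne.

Definition piece {X : Type} (g : X -> X) (ig : X -> nat) (i : nat) : X -> Prop :=
  fun x => exists y, ig y = i /\ g y = x.

Section Pieces.
Context {Sg X : Type} (alpha : Sg -> X -> option X) (g : X -> X) (ig : X -> nat) (st : nat -> Sg)
  (Hback : forall y, alpha (st (ig y)) (g y) = Some y).

Lemma Img_piece i z : Img alpha (st i) (piece g ig i) z <-> ig z = i.
Proof.
  split.
  - intros [x [[y [<- <-]] Hz]]. rewrite Hback in Hz. congruence.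
  - intros <-. exists (g z). split; [exists z; auto|apply Hback].
Qed.

Lemma piece_Dom i : Subset (piece g ig i) (Dom alpha (st i)).
Proof. intros x [y [<- <-]]. exists y. apply Hback. Qed.

End Pieces.

Lemma piece_disjoint {X : Type} (g : X -> X) (ig : X -> nat) i i' :
  (forall y y', g y = g y' -> y = y') -> i <> i' -> Disjoint (piece g ig i) (piece g ig i').
Proof.
  intros Hg Hne x [[y [<- <-]] [y' [<- E]]]. apply Hne. rewrite (Hg y y'); auto.
Qed.

Lemma In_images_list_nth {Sg X : Type} (alpha : Sg -> X -> option X) (W : list Sg) (d : Sg) y x :
  In x (images_list alpha W y) -> exists i, (i < length W)%nat /\ alpha (nth i W d) y = Some x.
Proof.
  intros Hx. apply In_images_list in Hx. destruct Hx as [w [Hw Hx]].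
  apply (In_nth _ _ d) in Hw. destruct Hw as [i [Hi <-]]. eauto.
Qed.

(* Sorting each [y] by the word realising [p y], resp. [q y], and moving the pieces
   back by the inverse words, covers [X] twice by the disjoint ranges of [p] and [q]. *)
Lemma Paradoxical_of_injections {Sg X : Type} (mul : Sg -> Sg -> Sg) (e : Sg)
  (alpha : Sg -> X -> option X) (W : list Sg) (p q : X -> X) :
  IsInverseSemigroup mul -> IsRepresentation mul e alpha ->
  (forall y, In (p y) (images_list alpha W y) /\ In (q y) (images_list alpha W y)) ->
  (forall y y', p y = p y' -> y = y') -> (forall y y', q y = q y' -> y = y') ->
  (forall y y', p y <> q y') ->
  Paradoxical alpha (fun _ => True).
Proof.
  intros HS Ha Hpq Hpi Hqi Hdisj.
  destruct (choice _ (representation_partial_inverse mul e alpha HS Ha)) as [inv Hinv].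
  destruct (choice _ (fun y => In_images_list_nth alpha W e y (p y) (proj1 (Hpq y))))
    as [ip Hip].
  destruct (choice _ (fun y => In_images_list_nth alpha W e y (q y) (proj2 (Hpq y))))
    as [iq Hiq].
  set (st := fun i => inv (nth i W e)).
  assert (Hpb : forall y, alpha (st (ip y)) (p y) = Some y) by (intros y; apply Hinv, Hip).
  assert (Hqb : forall y, alpha (st (iq y)) (q y) = Some y) by (intros y; apply Hinv, Hiq).
  exists (length W), (length W), (piece p ip), (piece q iq), st, st.
  repeat split; auto.
  - intros i _. apply piece_Dom, Hpb.
  - intros i _. apply piece_Dom, Hqb.
  - intros _. exists (ip y). split; [apply Hip|]. apply Img_piece; auto.
  - intros i i' _ _ Hne z [H1 H2]. apply Img_piece in H1, H2; auto. congruence.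
  - intros _. exists (iq y). split; [apply Hiq|]. apply Img_piece; auto.
  - intros j j' _ _ Hne z [H1 H2]. apply Img_piece in H1, H2; auto. congruence.
  - intros i i' _ _. apply piece_disjoint, Hpi.
  - intros j j' _ _. apply piece_disjoint, Hqi.
  - intros i j _ _ x [[y [_ <-]] [y' [_ E]]]. exact (Hdisj y y' (eq_sym E)).
Qed.

Lemma not_Paradoxical_DomainFolner {Sg X : Type} (mul : Sg -> Sg -> Sg) (e : Sg)
  (alpha : Sg -> X -> option X) :
  IsInverseSemigroup mul -> IsRepresentation mul e alpha -> Countable Sg ->
  ~ Paradoxical alpha (fun _ => True) -> DomainFolner alpha (fun _ => True).
Proof.
  intros HS Ha [f Hf] Hnp. apply NNPP. intros Hnf. apply Hnp.
  destruct (not_DomainFolner_uniform_boundary alpha f Hf Hnf) as [N HN].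
  set (W := words mul e f N (S N)).
  destruct (two_to_one_global alpha W (Images_words_doubling mul e alpha Ha f N HN))
    as [p [q [Hpq [Hpi [Hqi Hdisj]]]]].
  exact (Paradoxical_of_injections mul e alpha W p q HS Ha Hpq Hpi Hqi Hdisj).
Qed.

Theorem mainTheorem4 (S X : Type) (mul : S -> S -> S) (e : S)
  (alpha : S -> X -> option X)
  (HS : IsInverseSemigroup mul) (He : IsIdentity mul e) (Hc : Countable S)
  (Ha : IsRepresentation mul e alpha) :
  (DomainMeasurable alpha (fun _ : X => True) <->
     ~ Paradoxical alpha (fun _ : X => True)) /\
  (~ Paradoxical alpha (fun _ : X => True) <->
     DomainFolner alpha (fun _ : X => True)).
Proof.
  pose proof (DomainMeasurable_not_Paradoxical alpha) as measurable_not_paradoxical.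
  pose proof (not_Paradoxical_DomainFolner mul e alpha HS Ha Hc) as not_paradoxical_folner.
  pose proof (DomainFolner_DomainMeasurable mul e alpha HS Ha) as folner_measurable.
  tauto.
Qed.
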